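(* Let $\mathbf{K}$ be an associative ring with unit $e$, let $\partial:\mathbf{K}\to\mathbf{K}$ be a derivation (additive and satisfying $\partial(xy)=\partial(x)y+x\partial(y)$), and let $\alpha$ be a ring automorphism of $\mathbf{K}$. Let $P\in\mathbf{K}$ be a constant projector: $P^2=P$, $\partial P=0$, $\alpha(P)=P$. Suppose $x\in\mathbf{K}$ is invertible and satisfies $$\partial(x^{-1}\partial x)=x^{-1}\alpha(x)-\alpha^{-1}(x^{-1})\,x$$ together with $Px=PxP$. Suppose moreover that $z:=PxP$ is invertible in the subring $P\mathbf{K}P$ (whose unit is $P$), with inverse $z^{-1}\in P\mathbf{K}P$. Then $z$ satisfies the same equation in $P\mathbf{K}P$: $$\partial(z^{-1}\partial z)=z^{-1}\alpha(z)-\alpha^{-1}(z^{-1})\,z.$$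
   Context: Here $\alpha^{-1}$ denotes the inverse automorphism. Since $P$ is constant, $\partial$ and $\alpha$ map $P\mathbf{K}P$ into itself. In the paper's application, $\mathbf{K}$ is the ring of bounded operators depending on parameters $k\in\mathbb{Z}$, $t\in\mathbb{R}$, with $\partial$ the $t$-derivative and $\alpha$ the shift $k\mapsto k+1$, and the equation is the abstract Toda lattice equation. *)

From mathcomp Require Import all_boot all_algebra.
Set Implicit Arguments. Unset Strict Implicit. Unset Printing Implicit Defensive.
Import GRing.Theory.
Local Open Scope ring_scope.

Definition derivation (K : pzRingType) (d : K -> K) : Prop :=
  (forall a b, d (a + b) = d a + d b) /\
  (forall a b, d (a * b) = d a * b + a * d b).

Definition ring_automorphism (K : pzRingType) (alpha alphai : K -> K) : Prop :=
  [/\ forall a b, alpha (a + b) = alpha a + alpha b,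
      forall a b, alpha (a * b) = alpha a * alpha b,
      alpha 1 = 1,
      cancel alpha alphai & cancel alphai alpha].

From mathcomp Require Import all_boot all_algebra.
Import GRing.Theory.
Local Open Scope ring_scope.

(* As [P x = P x P], [z] equals [P x] and its inverse in [P K P] is [P x^-1]
   (only [x x^-1 = 1] and [z^-1 z = P] are needed for this).  Hence
   [P x^-1 P = P x^-1], and applying [alpha^-1], which fixes [P], gives
   [P alpha^-1(x^-1) P = P alpha^-1(x^-1)].  These identities remove every inner
   [P] from the equation for [z]; since [d P = 0], it becomes the equation for
   [x] multiplied on the left by [P]. *)

Lemma automorphism_invM {K : pzRingType} {alpha alphai : K -> K} :
  ring_automorphism alpha alphai ->
  forall a b, alphai (a * b) = alphai a * alphai b.
Proof.
by case=> _ aM _ aK aiK a b; rewrite -{1}(aiK a) -{1}(aiK b) -aM aK.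
Qed.

Lemma derivation_mul_const {K : pzRingType} {d : K -> K} {c : K} :
  derivation d -> d c = 0 -> forall a, d (c * a) = c * d a.
Proof. by case=> _ dM dc0 a; rewrite dM dc0 mul0r add0r. Qed.

Lemma corner_morph {K : pzRingType} {f : K -> K} {P a : K} :
  (forall u v, f (u * v) = f u * f v) -> f P = P ->
  P * a * P = P * a -> P * f a * P = P * f a.
Proof. by move=> fM fP aP; rewrite -fP -!fM aP. Qed.

Lemma corner_invE {K : pzRingType} {P x xi zi : K} :
  P * x = P * x * P -> x * xi = 1 ->
  zi * P = zi -> zi * (P * x * P) = P -> zi = P * xi.
Proof.
move=> Px xxi ziP ziz.
have zix : zi * x = P by rewrite -ziP -mulrA Px.
by rewrite -[zi]mulr1 -xxi mulrA zix.
Qed.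

Theorem lemma2 (K : pzRingType) (d alpha alphai : K -> K) (P x xi zi : K)
  (hd : derivation d) (halpha : ring_automorphism alpha alphai)
  (hP2 : P * P = P) (hdP : d P = 0) (haP : alpha P = P)
  (hxr : x * xi = 1) (hxl : xi * x = 1)
  (heq : d (xi * d x) = xi * alpha x - alphai xi * x)
  (hPx : P * x = P * x * P)
  (hziP : zi = P * zi * P)
  (hzr : (P * x * P) * zi = P) (hzl : zi * (P * x * P) = P) :
  let z := P * x * P in
  d (zi * d z) = zi * alpha z - alphai zi * z.
Proof.
move=> z; rewrite {}/z -hPx.
have aiM := automorphism_invM halpha.
case: halpha => _ aM _ aK _.
have aiP : alphai P = P by rewrite -{1}haP aK.
have ziP : zi * P = zi by rewrite hziP -!mulrA hP2.
have zi_def : zi = P * xi := corner_invE hPx hxr ziP hzl.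
have xiP : P * xi * P = P * xi by rewrite -zi_def ziP.
have aixiP := corner_morph aiM aiP xiP.
have dPl := derivation_mul_const hd hdP.
rewrite zi_def dPl mulrA xiP -mulrA dPl heq.
by rewrite aM aiM haP aiP mulrBr !mulrA xiP aixiP.
Qed.
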